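(* Let $L$ be a split regular Hom-Lie color algebra with symmetric root system $\Lambda$, and let $\alpha,\gamma\in\Lambda$ with $\gamma\notin\Lambda_\alpha$. Then $[L_{\Lambda_\alpha},L_{\Lambda_\gamma}]=0$.
   Context: Let $\mathbb{K}$ be a field and $\Gamma$ an abelian group. A bi-character is $\varepsilon:\Gamma\times\Gamma\to\mathbb{K}\setminus\{0\}$ with $\varepsilon(a,b)\varepsilon(b,a)=1$, $\varepsilon(a,b+c)=\varepsilon(a,b)\varepsilon(a,c)$, $\varepsilon(a+b,c)=\varepsilon(a,c)\varepsilon(b,c)$. A Hom-Lie color algebra $(L,[\cdot,\cdot],\phi,\varepsilon)$ is a $\Gamma$-graded space $L=\bigoplus_gL_g$ with bilinear $[\cdot,\cdot]$, $[L_g,L_h]\subset L_{g+h}$, linear $\phi$ with $\phi(L_g)\subset L_g$, $\phi([x,y])=[\phi x,\phi y]$, such that for homogeneous $x,y,z$ of degrees $\bar x,\bar y,\bar z$: $[x,y]=-\varepsilon(\bar x,\bar y)[y,x]$ and $\varepsilon(\bar z,\bar x)[\phi(x),[y,z]]+\varepsilon(\bar x,\bar y)[\phi(y),[z,x]]+\varepsilon(\bar y,\bar z)[\phi(z),[x,y]]=0$; regular means $\phi$ bijective. A subalgebra is a graded subspace $A$ with $[A,A]\subset A$, $\phi(A)=A$; abelian if $[A,A]=0$. $H=\bigoplus_gH_g$ is a maximal abelian graded subalgebra (so $\phi(H_0)=H_0$). For linear $\alpha:H_0\to\mathbb{K}$, $L_\alpha=\{v:[h,v]=\alpha(h)\phi(v)\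 \forall h\in H_0\}$; $\Lambda=\{\alpha\in H_0^*\setminus\{0\}:L_\alpha\neq0\}$; $L$ is split if $L=H\oplus(\bigoplus_{\alpha\in\Lambda}L_\alpha)$. $\Lambda$ is symmetric if $\alpha\in\Lambda\Rightarrow-\alpha\in\Lambda$. For $z\in\mathbb{Z}$, $\alpha\phi^{z}:=\alpha\circ(\phi|_{H_0})^{z}$; $\mathbb{N}=\{0,1,2,\dots\}$. Connection: for $\alpha,\beta\in\Lambda$, $\alpha$ is connected to $\beta$ if there exist $k\ge1$ and $\alpha_1,\dots,\alpha_k\in\Lambda$ such that: if $k=1$, $\alpha_1\in\{\alpha\phi^{-n}:n\in\mathbb{N}\}\cap\{\pm\beta\phi^{-m}:m\in\mathbb{N}\}$; if $k\ge2$, then $\alpha_1\in\{\alpha\phi^{-n}:n\in\mathbb{N}\}$, for each $i=1,\dots,k-2$ one has $\alpha_1\phi^{-i}+\alpha_2\phi^{-i}+\alpha_3\phi^{-i+1}+\cdots+\alpha_{i+1}\phi^{-1}\in\Lambda$, and $\alpha_1\phi^{-k+1}+\alpha_2\phi^{-k+1}+\alpha_3\phi^{-k+2}+\cdots+\alpha_k\phi^{-1}\in\{\pm\beta\phi^{-m}:m\in\mathbb{N}\}$. Connectedness $\sim$ is an equivalence relation on $\Lambda$; $\Lambda_\alpha:=\{\beta\in\Lambda:\beta\sim\alpha\}$. Define $H_{\Lambda_\alpha}:=\mathrm{span}_{\mathbb{K}}\{[L_\beta,L_{-\beta}]:\beta\in\Lambda_\alpha\}\subset H$, $V_{\Lambda_\alpha}:=\bigoplus_{\beta\in\Lambda_\alpha}L_\beta$,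 and $L_{\Lambda_\alpha}:=H_{\Lambda_\alpha}\oplus V_{\Lambda_\alpha}$. *)

From HB Require Import structures.
From mathcomp Require Import all_boot all_order all_algebra.
Set Implicit Arguments. Unset Strict Implicit. Unset Printing Implicit Defensive.
Import GRing.Theory.
Local Open Scope ring_scope.

(* Data of a (Hom-Lie color) algebra over the field K, graded by the abelian
   group G, on the K-vector space L.  [Lg g] is the homogeneous component L_g
   (as a predicate on L); [phiinv] is the (intended) inverse of [phi]. *)
Record HLCdata (K : fieldType) (G : zmodType) (L : lmodType K) := HLCData {
  eps : G -> G -> K;
  br : L -> L -> L;
  phi : L -> L;
  phiinv : L -> L;
  Lg : G -> L -> Prop }.

Section Defs.
Context {K : fieldType} {G : zmodType} {L : lmodType K}.

Definition bicharacter (e : G -> G -> K) : Prop :=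
  (forall a b, e a b != 0) /\
  (forall a b, e a b * e b a = 1) /\
  (forall a b c, e a (b + c) = e a b * e a c) /\
  (forall a b c, e (a + b) c = e a c * e b c).

Definition subspace (A : L -> Prop) : Prop :=
  A 0 /\ forall (c : K) x y, A x -> A y -> A (c *: x + y).

Definition hdecomp (S : @HLCdata K G L) (A : L -> Prop) (x : L) : Prop :=
  exists n (g : 'I_n -> G) (v : 'I_n -> L),
    injective g /\ (forall i, Lg S (g i) (v i) /\ A (v i)) /\
    x = \sum_(i < n) v i.

Definition graded_space (S : @HLCdata K G L) : Prop :=
  (forall g, subspace (Lg S g)) /\
  (forall x, hdecomp S (fun _ => True) x) /\
  (forall n (g : 'I_n -> G) (v : 'I_n -> L), injective g ->
     (forall i, Lg S (g i) (v i)) -> \sum_(i < n) v i = 0 -> forall i, v i = 0).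

Definition HomLieColor (S : @HLCdata K G L) : Prop :=
  bicharacter (eps S) /\
  graded_space S /\
  (forall (c : K) x y z, br S (c *: x + y) z = c *: br S x z + br S y z) /\
  (forall (c : K) x y z, br S z (c *: x + y) = c *: br S z x + br S z y) /\
  (forall (c : K) x y, phi S (c *: x + y) = c *: phi S x + phi S y) /\
  (forall g h x y, Lg S g x -> Lg S h y -> Lg S (g + h) (br S x y)) /\
  (forall g x, Lg S g x -> Lg S g (phi S x)) /\
  (forall x y, phi S (br S x y) = br S (phi S x) (phi S y)) /\
  (forall a b x y, Lg S a x -> Lg S b y ->
     br S x y = - (eps S a b *: br S y x)) /\
  (forall a b c x y z, Lg S a x -> Lg S b y -> Lg S c z ->
     eps S c a *: br S (phi S x) (br S y z) +
     eps S a b *: br S (phi S y) (br S z x) +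
     eps S b c *: br S (phi S z) (br S x y) = 0).

Definition regular (S : @HLCdata K G L) : Prop :=
  cancel (phi S) (phiinv S) /\ cancel (phiinv S) (phi S).

Definition graded_subspace (S : @HLCdata K G L) (A : L -> Prop) : Prop :=
  subspace A /\ forall x, A x -> hdecomp S A x.

Definition subalgebra (S : @HLCdata K G L) (A : L -> Prop) : Prop :=
  graded_subspace S A /\
  (forall x y, A x -> A y -> A (br S x y)) /\
  (forall x, A x -> A (phi S x)) /\
  (forall y, A y -> exists x, A x /\ phi S x = y).

Definition abelian (S : @HLCdata K G L) (A : L -> Prop) : Prop :=
  forall x y, A x -> A y -> br S x y = 0.

Definition max_abelian_subalgebra (S : @HLCdata K G L) (H : L -> Prop) : Prop :=
  subalgebra S H /\ abelian S H /\
  forall B, subalgebra S B -> abelian S B -> (forall x, H x -> B x) ->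
    forall x, B x -> H x.

Definition H0 (S : @HLCdata K G L) (H : L -> Prop) (x : L) : Prop :=
  H x /\ Lg S 0 x.

(* A linear form on H_0 is represented by a function L -> K, linear on H_0;
   two such represent the same form iff they agree on H_0. *)
Definition lin_on_H0 (S : @HLCdata K G L) H (a : L -> K) : Prop :=
  forall (c : K) x y, H0 S H x -> H0 S H y -> a (c *: x + y) = c * a x + a y.

Definition agree (S : @HLCdata K G L) H (a b : L -> K) : Prop :=
  forall h, H0 S H h -> a h = b h.

Definition rootspace (S : @HLCdata K G L) H (a : L -> K) (v : L) : Prop :=
  forall h, H0 S H h -> br S h v = a h *: phi S v.

Definition is_root (S : @HLCdata K G L) H (a : L -> K) : Prop :=
  lin_on_H0 S H a /\ (exists h, H0 S H h /\ a h != 0) /\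
  (exists v, v != 0 /\ rootspace S H a v).

Definition symmetric_roots (S : @HLCdata K G L) H : Prop :=
  forall a, is_root S H a -> is_root S H (fun h => - a h).

Definition split_alg (S : @HLCdata K G L) (H : L -> Prop) : Prop :=
  (forall x, exists h n (a : 'I_n -> L -> K) (v : 'I_n -> L),
     H h /\ (forall i, is_root S H (a i) /\ rootspace S H (a i) (v i)) /\
     x = h + \sum_(i < n) v i) /\
  (forall h n (a : 'I_n -> L -> K) (v : 'I_n -> L),
     H h -> (forall i, is_root S H (a i) /\ rootspace S H (a i) (v i)) ->
     (forall i j, i != j -> ~ agree S H (a i) (a j)) ->
     h + \sum_(i < n) v i = 0 -> h = 0 /\ forall i, v i = 0).

Definition phipow (S : @HLCdata K G L) (a : L -> K) (n : nat) : L -> K :=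
  fun h => a (iter n (phiinv S) h).

Definition in_orbit (S : @HLCdata K G L) H (a b : L -> K) : Prop :=
  exists n, agree S H a (phipow S b n).

Definition in_pm_orbit (S : @HLCdata K G L) H (a b : L -> K) : Prop :=
  exists m, agree S H a (phipow S b m) \/
            agree S H a (fun h => - phipow S b m h).

(* al_1 phi^{-i} + al_2 phi^{-i} + al_3 phi^{-i+1} + ... + al_{i+1} phi^{-1} *)
Definition conn_sum (S : @HLCdata K G L) (al : nat -> L -> K) (i : nat) : L -> K :=
  fun h => phipow S (al 1%N) i h +
           \sum_(2 <= j < i.+2) phipow S (al j) (i.+2 - j) h.

Definition connected (S : @HLCdata K G L) H (a b : L -> K) : Prop :=
  exists (k : nat) (al : nat -> L -> K),
    (1 <= k)%N /\ (forall j, (1 <= j <= k)%N -> is_root S H (al j)) /\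
    ((k = 1%N /\ in_orbit S H (al 1%N) a /\ in_pm_orbit S H (al 1%N) b) \/
     ((2 <= k)%N /\ in_orbit S H (al 1%N) a /\
      (forall i, (1 <= i <= k - 2)%N -> is_root S H (conn_sum S al i)) /\
      in_pm_orbit S H (conn_sum S al (k - 1)) b)).

Definition root_class (S : @HLCdata K G L) H (a b : L -> K) : Prop :=
  is_root S H b /\ connected S H b a.

Definition spanP (P : L -> Prop) (x : L) : Prop :=
  exists n (c : 'I_n -> K) (v : 'I_n -> L),
    (forall i, P (v i)) /\ x = \sum_(i < n) c i *: v i.

Definition H_class (S : @HLCdata K G L) H (a : L -> K) : L -> Prop :=
  spanP (fun w => exists b x y, root_class S H a b /\ rootspace S H b x /\
           rootspace S H (fun h => - b h) y /\ w = br S x y).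

Definition V_class (S : @HLCdata K G L) H (a : L -> K) : L -> Prop :=
  spanP (fun w => exists b, root_class S H a b /\ rootspace S H b w).

Definition L_class (S : @HLCdata K G L) H (a : L -> K) (x : L) : Prop :=
  exists h v, H_class S H a h /\ V_class S H a v /\ x = h + v.

End Defs.

From Pilot Require Import Defs.
From HB Require Import structures.
From mathcomp Require Import all_boot all_order all_algebra.
From mathcomp Require Import zify.
From Stdlib Require Import Classical.
Set Implicit Arguments. Unset Strict Implicit. Unset Printing Implicit Defensive.
Import GRing.Theory.
Local Open Scope ring_scope.

(* Root spaces multiply like a grading twisted by phi:
   [L_b, L_d] is contained in L_{(b + d) phi^-1}, so a nonzero bracket of root
   vectors of b and d gives a connection from b to d.  Hence V_{Lambda_a} and
   V_{Lambda_c} commute.  For the H-parts one applies the Hom-Jacobi identity to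
   x in L_b, y in L_{-b} and phi^-1 w with w in L_d: when b and d are not
   connected, the two other terms are brackets of root vectors of unconnected
   roots, so [w, [x, y]] = 0; a second application of the same argument gives
   [[x, y], [x', y']] = 0.  Connectedness is handled through the relation
   [chain], whose step r |-> (r + b) phi^-1 mirrors the sums in the definition
   and makes symmetry and transitivity provable. *)

Section LinearMap.
Variables (K : fieldType) (L : lmodType K) (f : L -> L).
Hypothesis f_lin : forall c x y, f (c *: x + y) = c *: f x + f y.

Lemma lin0 : f 0 = 0.
Proof. by have := f_lin (-1) 0 0; rewrite scaler0 addr0 scaleN1r addrC subrr. Qed.

Lemma linD x y : f (x + y) = f x + f y.
Proof. by rewrite -[x]scale1r f_lin !scale1r. Qed.

Lemma linZ c x : f (c *: x) = c *: f x.
Proof. by rewrite -[c *: x]addr0 f_lin lin0 addr0. Qed.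

Lemma linN x : f (- x) = - f x.
Proof. by rewrite -scaleN1r linZ scaleN1r. Qed.

Lemma lin_sum n (F : 'I_n -> L) : f (\sum_(i < n) F i) = \sum_(i < n) f (F i).
Proof.
apply: (big_rec2 (fun a b => f a = b)); first exact: lin0.
by move=> i a b _ <-; rewrite linD.
Qed.

End LinearMap.

Section HomLieColorAlgebra.
Variables (K : fieldType) (G : zmodType) (L : lmodType K).
Variables (S : @HLCdata K G L) (H : L -> Prop).
Hypothesis HLC : HomLieColor S.
Hypothesis REG : regular S.

Local Notation br := (br S).
Local Notation phi := (phi S).
Local Notation phiinv := (phiinv S).
Local Notation Lg := (Lg S).
Local Notation eps := (eps S).

Lemma br_linl c x y z : br (c *: x + y) z = c *: br x z + br y z.
Proof. by case: HLC => _ [_ [-> _]]. Qed.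

Lemma br_linr c x y z : br z (c *: x + y) = c *: br z x + br z y.
Proof. by case: HLC => _ [_ [_ [-> _]]]. Qed.

Lemma phi_lin c x y : phi (c *: x + y) = c *: phi x + phi y.
Proof. by case: HLC => _ [_ [_ [_ [-> _]]]]. Qed.

Lemma Lg_br g h x y : Lg g x -> Lg h y -> Lg (g + h) (br x y).
Proof. by case: HLC => _ [_ [_ [_ [_ [D _]]]]]; apply: D. Qed.

Lemma Lg_phi g x : Lg g x -> Lg g (phi x).
Proof. by case: HLC => _ [_ [_ [_ [_ [_ [D _]]]]]]; apply: D. Qed.

Lemma phi_br x y : phi (br x y) = br (phi x) (phi y).
Proof. by case: HLC => _ [_ [_ [_ [_ [_ [_ [D _]]]]]]]; apply: D. Qed.

Lemma br_skew a b x y : Lg a x -> Lg b y -> br x y = - (eps a b *: br y x).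
Proof. by case: HLC => _ [_ [_ [_ [_ [_ [_ [_ [D _]]]]]]]]; apply: D. Qed.

Lemma hom_jacobi a b c x y z : Lg a x -> Lg b y -> Lg c z ->
  eps c a *: br (phi x) (br y z) + eps a b *: br (phi y) (br z x) +
  eps b c *: br (phi z) (br x y) = 0.
Proof. by case: HLC => _ [_ [_ [_ [_ [_ [_ [_ [_ D]]]]]]]]; apply: D. Qed.

Lemma phiK : cancel phi phiinv. Proof. by case: REG. Qed.
Lemma phiinvK : cancel phiinv phi. Proof. by case: REG. Qed.
Lemma phi_inj : injective phi. Proof. exact: can_inj phiK. Qed.

Lemma phiinv_lin c x y : phiinv (c *: x + y) = c *: phiinv x + phiinv y.
Proof. by apply: phi_inj; rewrite phiinvK phi_lin !phiinvK. Qed.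

Lemma eps_neq0 a b : eps a b != 0. Proof. by case: HLC => [[]]. Qed.

Lemma eps_mul_swap a b : eps a b * eps b a = 1.
Proof. by case: HLC => [[_ []]]. Qed.

Lemma eps0l a : eps 0 a = 1.
Proof.
case: HLC => [[_ [_ [_ epsDl]]] _].
have e := epsDl 0 0 a; rewrite addr0 in e.
have : eps 0 a * (eps 0 a - 1) = 0 by rewrite mulrBr mulr1 -e subrr.
by move/eqP; rewrite mulf_eq0 (negbTE (eps_neq0 _ _)) subr_eq0 => /eqP.
Qed.

Lemma eps0r a : eps a 0 = 1.
Proof. by have := eps_mul_swap a 0; rewrite eps0l mulr1. Qed.

Lemma br0r z : br z 0 = 0. Proof. exact: (lin0 (fun c x y => br_linr c x y z)). Qed.

Lemma brDl x y z : br (x + y) z = br x z + br y z.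
Proof. exact: (linD (fun c x y => br_linl c x y z)). Qed.

Lemma brDr x y z : br z (x + y) = br z x + br z y.
Proof. exact: (linD (fun c x y => br_linr c x y z)). Qed.

Lemma brZl c x z : br (c *: x) z = c *: br x z.
Proof. exact: (linZ (fun c x y => br_linl c x y z)). Qed.

Lemma brZr c x z : br z (c *: x) = c *: br z x.
Proof. exact: (linZ (fun c x y => br_linr c x y z)). Qed.

Lemma brNr x z : br z (- x) = - br z x.
Proof. exact: (linN (fun c x y => br_linr c x y z)). Qed.

Lemma br_suml n (F : 'I_n -> L) z : br (\sum_(i < n) F i) z = \sum_(i < n) br (F i) z.
Proof. exact: (lin_sum (fun c x y => br_linl c x y z)). Qed.

Lemma br_sumr n (F : 'I_n -> L) z : br z (\sum_(i < n) F i) = \sum_(i < n) br z (F i).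
Proof. exact: (lin_sum (fun c x y => br_linr c x y z)). Qed.

Lemma Lg_subspace g : subspace (Lg g). Proof. by case: HLC => _ [[]]. Qed.

Lemma Lg0 g : Lg g 0. Proof. by case: (Lg_subspace g). Qed.

Lemma Lg_lin g c x y : Lg g x -> Lg g y -> Lg g (c *: x + y).
Proof. by case: (Lg_subspace g) => _; apply. Qed.

Lemma LgD g x y : Lg g x -> Lg g y -> Lg g (x + y).
Proof. by move=> *; rewrite -[x]scale1r; apply: Lg_lin. Qed.

Lemma LgZ g c x : Lg g x -> Lg g (c *: x).
Proof. by move=> *; rewrite -[_ *: _]addr0; apply: Lg_lin => //; apply: Lg0. Qed.

Lemma Lg_sum g n (F : 'I_n -> L) : (forall i, Lg g (F i)) -> Lg g (\sum_(i < n) F i).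
Proof.
move=> HF; apply: (big_rec (Lg g)); first exact: Lg0.
by move=> i x _; apply: LgD.
Qed.

Lemma homogeneous_sum_eq0 n (d : 'I_n -> G) (v : 'I_n -> L) : injective d ->
  (forall i, Lg (d i) (v i)) -> \sum_(i < n) v i = 0 -> forall i, v i = 0.
Proof. by case: HLC => _ [[_ [_ uniq_dec]] _]; apply: uniq_dec. Qed.

Lemma homogeneous_decomp x : exists n (d : 'I_n -> G) (v : 'I_n -> L),
  injective d /\ (forall i, Lg (d i) (v i)) /\ x = \sum_(i < n) v i.
Proof.
case: HLC => _ [[_ [dec _]] _]; have [n [d [v [inj_d [Hv ->]]]]] := dec x.
by exists n, d, v; do 2!split=> //; move=> i; case: (Hv i).
Qed.

Lemma homogeneous_component g y n (d : 'I_n -> G) (w : 'I_n -> L) :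
  injective d -> (forall i, Lg (d i) (w i)) -> Lg g y -> \sum_(i < n) w i = y ->
  forall i, d i != g -> w i = 0.
Proof.
move=> inj_d Hw Hy Ey.
case: (pickP (fun i => d i == g)) => [i0 /eqP di0 | no_g].
  pose w' i := w i - (if i == i0 then y else 0).
  have Hw' i : Lg (d i) (w' i).
    apply: LgD => //; rewrite -scaleN1r; apply: LgZ.
    by case: eqP => [->|_]; [rewrite di0 | apply: Lg0].
  have : \sum_(i < n) w' i = 0.
    rewrite sumrB Ey (bigD1 i0) //= eqxx big1 ?addr0 ?subrr // => i.
    by move/negbTE ->.
  move/(homogeneous_sum_eq0 inj_d Hw') => w'0 i ni.
  have := w'0 i; rewrite /w'; case: eqP => [ei|_]; last by rewrite subr0.
  by rewrite ei di0 eqxx in ni.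
pose D (i : 'I_n.+1) := if unlift ord0 i is Some j then d j else g.
pose W (i : 'I_n.+1) := if unlift ord0 i is Some j then w j else - y.
have inj_D : injective D.
  move=> i j; rewrite /D.
  case: unliftP => [i' ->|->]; case: unliftP => [j' ->|->] //.
  - by move/inj_d ->.
  - by move=> e; have := no_g i'; rewrite e eqxx.
  - by move=> e; have := no_g j'; rewrite -e eqxx.
have HW i : Lg (D i) (W i).
  rewrite /D /W; case: unliftP => [j _|_] //.
  by rewrite -scaleN1r; apply: LgZ.
have : \sum_(i < n.+1) W i = 0.
  rewrite big_ord_recl /W unlift_none.
  by under eq_bigr => i _ do rewrite liftK; rewrite Ey addNr.
move/(homogeneous_sum_eq0 inj_D HW) => W0 i _.
by have := W0 (lift ord0 i); rewrite /W liftK.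
Qed.

Lemma Lg_phiinv g y : Lg g y -> Lg g (phiinv y).
Proof.
move=> Hy; have [n [d [v [inj_d [Hv Ev]]]]] := homogeneous_decomp (phiinv y).
have Ey : \sum_(i < n) phi (v i) = y by rewrite -(lin_sum phi_lin) -Ev phiinvK.
have v0 := homogeneous_component inj_d (fun i => Lg_phi (Hv i)) Hy Ey.
rewrite Ev; apply: Lg_sum => i; have [<- //|ne] := eqVneq (d i) g.
have -> : v i = 0 by apply: phi_inj; rewrite v0 // (lin0 phi_lin).
exact: Lg0.
Qed.


Hypothesis H_subalg : subalgebra S H.
Hypothesis roots_sym : symmetric_roots S H.

Local Notation H0 := (H0 S H).
Local Notation agree := (agree S H).
Local Notation rootspace := (rootspace S H).
Local Notation is_root := (is_root S H).
Local Notation lin := (lin_on_H0 S H).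
Local Notation phipow := (phipow S).

Lemma H0_lin c x y : H0 x -> H0 y -> H0 (c *: x + y).
Proof.
case: H_subalg => [[[_ Hlin] _] _] [Hx gx] [Hy gy].
by split; [exact: Hlin | exact: Lg_lin].
Qed.

Lemma H0_phi h : H0 h -> H0 (phi h).
Proof. by case: H_subalg => _ [_ [Hphi _]] [Hh gh]; split; [exact: Hphi | exact: Lg_phi]. Qed.

Lemma H0_phiinv h : H0 h -> H0 (phiinv h).
Proof.
case: H_subalg => _ [_ [_ Hsurj]] [Hh gh]; split; last exact: Lg_phiinv.
by have [x [Hx <-]] := Hsurj _ Hh; rewrite phiK.
Qed.

Lemma H0_iter n h : H0 h -> H0 (iter n phiinv h).
Proof. by elim: n => //= n IH /IH; apply: H0_phiinv. Qed.

Lemma iter_phiinv_lin n c x y :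
  iter n phiinv (c *: x + y) = c *: iter n phiinv x + iter n phiinv y.
Proof. by elim: n => //= n ->; rewrite phiinv_lin. Qed.

Lemma iter_phiinvS n h : iter n phiinv (phiinv h) = phiinv (iter n phiinv h).
Proof. by rewrite -iterSr. Qed.

Lemma agree_refl a : agree a a. Proof. by []. Qed.
Lemma agree_sym a b : agree a b -> agree b a. Proof. by move=> E h /E ->. Qed.
Lemma agree_trans a b c : agree a b -> agree b c -> agree a c.
Proof. by move=> E1 E2 h Hh; rewrite E1 // E2. Qed.
Lemma eq_agree a b : (forall h, a h = b h) -> agree a b. Proof. by move=> E h _. Qed.

Lemma agree_phipow a b n : agree a b -> agree (phipow a n) (phipow b n).
Proof. by move=> E h Hh; rewrite /phipow E //; apply: H0_iter. Qed.

Lemma rootspace_agree a b v : agree a b -> rootspace a v -> rootspace b v.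
Proof. by move=> E R h Hh; rewrite R // E. Qed.

Lemma root_agree a b : agree a b -> is_root a -> is_root b.
Proof.
move=> E [La [[h [Hh nz]] [v [nv Rv]]]]; split.
  by move=> c x y Hx Hy; rewrite -!E ?La //; apply: H0_lin.
split; first by exists h; rewrite -E.
by exists v; split=> //; apply: rootspace_agree Rv.
Qed.

Lemma lin_add a b : lin a -> lin b -> lin (fun h => a h + b h).
Proof.
move=> La Lb c x y Hx Hy; rewrite La // Lb //.
by rewrite mulrDr !addrA (addrAC (c * a x)).
Qed.

Lemma lin_phipow a n : lin a -> lin (phipow a n).
Proof. by move=> La c x y Hx Hy; rewrite /phipow iter_phiinv_lin La //; apply: H0_iter. Qed.

Lemma root_phipow1 a : is_root a -> is_root (phipow a 1).
Proof.
move=> [La [[h [Hh nz]] [v [nv Rv]]]]; split; first exact: lin_phipow.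
split; first by exists (phi h); split; [exact: H0_phi | rewrite /phipow /= phiK].
exists (phi v); split.
  by apply: contra nv => /eqP e; apply/eqP; apply: phi_inj; rewrite e (lin0 phi_lin).
move=> h' Hh'; rewrite -{1}(phiinvK h') -phi_br Rv; last exact: H0_phiinv.
by rewrite (linZ phi_lin).
Qed.

Lemma root_phipow a n : is_root a -> is_root (phipow a n).
Proof.
elim: n a => [|n IH] a Ra; first by apply: root_agree Ra; apply: eq_agree.
exact: (IH (phipow a 1) (root_phipow1 Ra)).
Qed.

Lemma rootspace_phiinv a v : rootspace a v -> rootspace (fun h => a (phi h)) (phiinv v).
Proof.
move=> Rv h Hh; rewrite -(phiK (br h (phiinv v))) phi_br phiinvK Rv; last exact: H0_phi.
by rewrite (linZ phiinv_lin) phiK.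
Qed.

Lemma root_comp_phi a : is_root a -> is_root (fun h => a (phi h)).
Proof.
move=> [La [[h [Hh nz]] [v [nv Rv]]]]; split.
  by move=> c x y Hx Hy /=; rewrite phi_lin La //; apply: H0_phi.
split; first by exists (phiinv h); split; [exact: H0_phiinv | rewrite phiinvK].
exists (phiinv v); split; last exact: rootspace_phiinv.
by apply: contra nv => /eqP e; apply/eqP; rewrite -(phiinvK v) e (lin0 phi_lin).
Qed.

Lemma root_opp a : is_root a -> is_root (fun h => - a h).
Proof. exact: roots_sym. Qed.

Lemma rootspace0 a : rootspace a 0.
Proof. by move=> h _; rewrite br0r (lin0 phi_lin) scaler0. Qed.

Lemma rootspaceD a x y : rootspace a x -> rootspace a y -> rootspace a (x + y).
Proof.
move=> Rx Ry h Hh; rewrite -[x]scale1r br_linr phi_lin Rx // Ry //.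
by rewrite !scale1r scalerDr.
Qed.

Lemma rootspace_sum a n (F : 'I_n -> L) : (forall i, rootspace a (F i)) ->
  rootspace a (\sum_(i < n) F i).
Proof.
move=> HF; apply: (big_rec (rootspace a)); first exact: rootspace0.
by move=> i x _; apply: rootspaceD.
Qed.

(* The Hom-Lie equation [h, v] = a(h) phi(v) is homogeneous of degree 0 in v,
   so it holds for each homogeneous component of v separately. *)
Lemma rootspace_hdecomp a v : rootspace a v -> exists n (d : 'I_n -> G) (w : 'I_n -> L),
  injective d /\ (forall i, Lg (d i) (w i) /\ rootspace a (w i)) /\
  v = \sum_(i < n) w i.
Proof.
move=> Rv; have [n [d [w [inj_d [Hw Ev]]]]] := homogeneous_decomp v.
exists n, d, w; do 2!split=> //; move=> i; split=> // h Hh.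
pose u j := br h (w j) - a h *: phi (w j).
have Hu j : Lg (d j) (u j).
  apply: LgD; first by rewrite -[d j]add0r; apply: Lg_br => //; case: Hh.
  by rewrite -scaleNr; apply: LgZ; apply: Lg_phi.
have : \sum_(j < n) u j = 0.
  by rewrite sumrB -br_sumr -scaler_sumr -(lin_sum phi_lin) -Ev Rv // subrr.
by move/(homogeneous_sum_eq0 inj_d Hu)/(_ i)/eqP; rewrite subr_eq0 => /eqP.
Qed.

Lemma rootspace_br_hom p q b d x y : Lg p x -> Lg q y ->
  rootspace b x -> rootspace d y ->
  rootspace (phipow (fun h => b h + d h) 1) (br x y).
Proof.
move=> Gx Gy Rx Ry h Hh; rewrite /phipow /=.
have Hh' := H0_phiinv Hh; have J := hom_jacobi Gx Gy Hh'.2.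
rewrite eps0l eps0r !scale1r phiinvK (br_skew Gy Hh'.2) eps0r scale1r in J.
rewrite Ry // Rx // in J.
rewrite brNr !brZr (br_skew (Lg_phi Gy) (Lg_phi Gx)) in J.
move/eqP: J; rewrite addrC addr_eq0 => /eqP ->.
rewrite phi_br !scalerN !scalerA opprD !opprK mulrAC eps_mul_swap mul1r.
by rewrite scalerDl addrC.
Qed.

Lemma rootspace_br b d x y : rootspace b x -> rootspace d y ->
  rootspace (phipow (fun h => b h + d h) 1) (br x y).
Proof.
move=> /rootspace_hdecomp [n [g [v [_ [Hv ->]]]]].
move=> /rootspace_hdecomp [m [g' [w [_ [Hw ->]]]]].
rewrite br_suml; apply: rootspace_sum => i; rewrite br_sumr; apply: rootspace_sum => j.
by case: (Hv i) => G1 R1; case: (Hw j) => G2 R2; apply: (rootspace_br_hom G1 G2).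
Qed.


(* [chain a r]: r is, up to agreement on H_0, a sum [conn_sum al i] of a
   connection starting at a; each step is [r |-> (r + b) phi^-1]. *)
Inductive chain (a : L -> K) : (L -> K) -> Prop :=
| chain0 : is_root a -> chain a a
| chain_agree r r' : chain a r -> agree r r' -> chain a r'
| chainS r b : chain a r -> is_root r -> is_root b ->
    chain a (phipow (fun h => r h + b h) 1).

Definition signed (s : bool) (f : L -> K) : L -> K :=
  if s then (fun h => - f h) else f.

Definition conn (x y : L -> K) : Prop :=
  exists a r, Defs.in_orbit S H a x /\ chain a r /\ in_pm_orbit S H r y.

Lemma chain_phipow n a r : chain a r -> chain (phipow a n) (phipow r n).
Proof.
elim=> [Ra|u u' _ IH E|u b _ IH Ru Rb].
- exact/chain0/root_phipow.
- exact: chain_agree IH (agree_phipow n E).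
- apply: chain_agree (chainS IH (root_phipow n Ru) (root_phipow n Rb)) _.
  by apply: eq_agree => h; rewrite /phipow /= iter_phiinvS.
Qed.

Lemma chain_signed s a r : chain a r -> chain (signed s a) (signed s r).
Proof.
case: s => //=; elim=> [Ra|u u' _ IH E|u b _ IH Ru Rb].
- exact/chain0/root_opp.
- by apply: chain_agree IH _ => h /E ->.
- apply: chain_agree (chainS IH (root_opp Ru) (root_opp Rb)) _.
  by apply: eq_agree => h; rewrite /phipow /= opprD.
Qed.

Lemma chain_trans a r r' t : chain a r -> chain r' t -> agree r r' -> chain a t.
Proof.
move=> Car; elim=> [_|u u' _ IH E|u b _ IH Ru Rb] E0.
- exact: chain_agree Car E0.
- exact: chain_agree (IH E0) E.
- exact: chainS (IH E0) Ru Rb.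
Qed.

(* A step [(u + b) phi^-1] is undone by the step with the root [- b phi^-1],
   at the price of a shift by phi^-2. *)
Lemma chain_rev a r : chain a r -> is_root r -> exists n, chain r (phipow a n).
Proof.
elim=> [Ra|u u' _ IH E|u b _ IH Ru Rb] Rt.
- by exists 0%N; apply: chain_agree (chain0 Ra) _; apply: eq_agree.
- have [n Cn] := IH (root_agree (agree_sym E) Rt).
  by exists n; apply: chain_trans (chain0 Rt) Cn (agree_sym E).
- have [n Cn] := IH Ru.
  have back : chain (phipow (fun h => u h + b h) 1) (phipow u 2).
    apply: chain_agree (chainS (chain0 Rt) Rt (root_opp (root_phipow1 Rb))) _.
    by apply: eq_agree => h; rewrite /phipow /= addrK.
  exists (n + 2)%N; apply: chain_agree (chain_trans back (chain_phipow 2 Cn) (agree_refl _)) _.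
  by apply: eq_agree => h; rewrite /phipow iterD.
Qed.

Lemma in_pm_orbitP r y : in_pm_orbit S H r y <-> exists m s, agree r (signed s (phipow y m)).
Proof.
split=> [[m [E|E]]|[m [[] E]]]; by [exists m, false | exists m, true | exists m; right | exists m; left].
Qed.

Lemma conn_sym x y : is_root y -> conn x y -> conn y x.
Proof.
move=> Ry [a [r [[n En] [Car /in_pm_orbitP [m [s Es]]]]]].
have Csar := chain_signed s Car.
have Rsr : is_root (signed s r).
  apply: (root_agree (a := phipow y m)); last exact: root_phipow.
  by move=> h Hh; case: s Es {Csar} => /= Es; rewrite Es // ?opprK.
have [t Ct] := chain_rev Csar Rsr.
exists (signed s r), (phipow (signed s a) t); do 2?split => //.
  by exists m => h Hh; case: s Es {Csar Rsr Ct} => /= Es; rewrite Es // ?opprK.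
apply/in_pm_orbitP; exists (n + t)%N, s => h Hh.
by rewrite /phipow /signed; case: s {Es Csar Rsr Ct} => /=; rewrite En ?iterD //; apply: H0_iter.
Qed.

Lemma conn_trans x y z : conn x y -> conn y z -> conn x z.
Proof.
move=> [a [r [[n En] [Car /in_pm_orbitP [m [s Es]]]]]].
move=> [a' [r' [[n' En'] [Car' /in_pm_orbitP [m' [s' Es']]]]]].
have C : chain (phipow a n') (signed s (phipow r' m)).
  apply: chain_trans (chain_phipow n' Car) (chain_signed s (chain_phipow m Car')) _.
  move=> h Hh; rewrite /phipow Es; last exact: H0_iter.
  case: s {Es} => /=; rewrite En' /phipow -?iterD ?(addnC m) //; exact: H0_iter.
exists (phipow a n'), (signed s (phipow r' m)); do 2?split => //.
  exists (n + n')%N => h Hh; rewrite /phipow En; last exact: H0_iter.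
  by rewrite /phipow -iterD.
apply/in_pm_orbitP; exists (m' + m)%N, (s (+) s') => h Hh.
have E2 := Es' _ (H0_iter m Hh); rewrite /phipow in E2.
by rewrite /signed /phipow; case: s {Es C}; case: s' {Es'} E2 => /= E2; rewrite E2 ?opprK iterD.
Qed.

Lemma conn_sum0 (al : nat -> L -> K) h : conn_sum S al 0 h = al 1%N h.
Proof. by rewrite /conn_sum big_geq // addr0. Qed.

Lemma conn_sumS (al : nat -> L -> K) i h :
  conn_sum S al i.+1 h = phipow (fun h => conn_sum S al i h + al i.+2 h) 1 h.
Proof.
rewrite /conn_sum /phipow /= big_nat_recr //= -addrA subSnn iter_phiinvS.
congr (_ + (_ + _)); apply: eq_big_nat => j /andP [_ lt_j].
by rewrite subSn ?iter_phiinvS // ltnW.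
Qed.

Lemma eq_conn_sum (al al' : nat -> L -> K) i :
  (forall j, (j <= i.+1)%N -> al j = al' j) ->
  forall h, conn_sum S al i h = conn_sum S al' i h.
Proof.
move=> E h; rewrite /conn_sum E //; congr (_ + _).
by apply: eq_big_nat => j /andP [_ lt_j]; rewrite E.
Qed.

Lemma in_pm_orbit_agree r r' y : agree r r' -> in_pm_orbit S H r' y -> in_pm_orbit S H r y.
Proof. by move=> E [m [E'|E']]; exists m; [left|right]; apply: agree_trans E E'. Qed.

Lemma connected_conn x y : connected S H x y -> conn x y.
Proof.
move=> [k [al [k1 [Ral conn_al]]]].
have [Ox Py Rsum] : [/\ Defs.in_orbit S H (al 1%N) x,
    in_pm_orbit S H (conn_sum S al (k - 1)) y &
    forall i, (1 <= i <= k - 2)%N -> is_root (conn_sum S al i)].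
  case: conn_al => [[-> [Ox Py]]|[_ [Ox [Rsum Py]]]]; last by split.
  split=> //; last by case.
  by apply: in_pm_orbit_agree Py; apply: eq_agree => h; rewrite conn_sum0.
exists (al 1%N), (conn_sum S al (k - 1)); do 2?split => //.
suff : forall i, (i <= k - 1)%N -> chain (al 1%N) (conn_sum S al i) by apply.
elim=> [_|i IH lt_ik].
  apply: chain_agree (chain0 (Ral _ _)) _; first by rewrite leqnn.
  by apply: eq_agree => h; rewrite conn_sum0.
have Ri : is_root (conn_sum S al i).
  case: i {IH} lt_ik => [_|i lt_ik]; last by apply: Rsum; lia.
  by apply: root_agree (Ral 1%N _); [apply: eq_agree => h; rewrite conn_sum0 | lia].
apply: chain_agree (chainS (IH (ltnW lt_ik)) Ri (Ral i.+2 _)) _; first lia.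
by apply: eq_agree => h; rewrite conn_sumS.
Qed.

Lemma chain_conn_sum a r : chain a r -> exists k (al : nat -> L -> K),
  al 1%N = a /\ (forall j, (0 < j <= k.+1)%N -> is_root (al j)) /\
  (forall i, (0 < i < k)%N -> is_root (conn_sum S al i)) /\
  agree (conn_sum S al k) r.
Proof.
elim=> [Ra|u u' _ [k [al [al1 [Ral [Rsum E]]]]] E'|u b _ [k [al [al1 [Ral [Rsum E]]]]] Ru Rb].
- exists 0%N, (fun _ => a); do 2?split=> //.
  split; first by move=> i; rewrite ltn0 andbF.
  by apply: eq_agree => h; rewrite conn_sum0.
- by exists k, al; do 3!split=> //; apply: agree_trans E E'.
- pose al' j := if j == k.+2 then b else al j.
  have E_al i : (i <= k)%N -> forall h, conn_sum S al i h = conn_sum S al' i h.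
    by move=> le_ik; apply: eq_conn_sum => j le_j; rewrite /al'; case: eqP => // ej; lia.
  exists k.+1, al'; split; first by rewrite /al'.
  split; first by move=> j le_j; rewrite /al'; case: eqP => // ne_j; apply: Ral; lia.
  split=> [i /andP [i0 le_ik]|h Hh].
    case: (ltngtP i k) => [lt_ik|gt_ik|->]; last 1 first.
    + apply: root_agree Ru; apply: agree_sym; apply: agree_trans E.
      by apply: eq_agree => h; rewrite E_al.
    + by apply: root_agree (Rsum i _); [apply: eq_agree => h; rewrite E_al // ltnW | lia].
    + lia.
  rewrite conn_sumS /phipow /= -E_al // E; last exact: H0_phiinv.
  by rewrite /al' eqxx.
Qed.

Lemma conn_connected x y : conn x y -> connected S H x y.
Proof.
move=> [a [r [Ox [Car Py]]]].
have [k [al [al1 [Ral [Rsum E]]]]] := chain_conn_sum Car.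
exists k.+1, al; split=> //; split; first by move=> j le_j; apply: Ral; lia.
case: k Ral Rsum E => [|k] Ral Rsum E.
  left; rewrite al1; do 2!split=> //; apply: in_pm_orbit_agree Py.
  by apply: agree_trans E; rewrite -al1; apply: eq_agree => h; rewrite conn_sum0.
right; rewrite al1; do 2!split=> //; split; first by move=> i le_i; apply: Rsum; lia.
by rewrite subn1; apply: in_pm_orbit_agree Py.
Qed.

Lemma conn_pm_orbit a b : is_root a -> in_pm_orbit S H a b -> conn a b.
Proof.
move=> Ra Pab; exists a, a; do 2?split => //; last exact: chain0.
by exists 0%N; apply: eq_agree.
Qed.

Lemma conn_opp b : is_root b -> conn b (fun h => - b h).
Proof. by move=> Rb; apply: conn_pm_orbit => //; exists 0%N; right => h _; rewrite /phipow opprK. Qed.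

Lemma conn_oppl b : is_root b -> conn (fun h => - b h) b.
Proof. by move=> Rb; apply: conn_pm_orbit; [exact: root_opp | exists 0%N; right => h _]. Qed.

Lemma conn_comp_phi d : is_root d -> conn d (fun h => d (phi h)).
Proof.
move=> Rd; apply: conn_pm_orbit => //; exists 1%N; left => h _.
by rewrite /phipow /= phiinvK.
Qed.

(* If (b + d) phi^-1 vanishes on H_0 then d = -b already; otherwise
   (b + d) phi^-1 is a root and the two-step connection b, d applies. *)
Lemma conn_rootspace_sum b d v : is_root b -> is_root d -> v != 0 ->
  rootspace (phipow (fun h => b h + d h) 1) v -> conn b d.
Proof.
move=> Rb Rd nv Rv; set s := phipow _ 1 in Rv.
case: (classic (exists h, H0 h /\ s h != 0)) => [[h0 [Hh0 nz]]|s0].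
  have Rs : is_root s.
    split; first by apply/lin_phipow/lin_add; [case: Rb | case: Rd].
    by split; [exists h0 | exists v].
  have Cbs : conn b s.
    exists b, s; split; first by exists 0%N; apply: eq_agree.
    by split; [exact: chainS (chain0 Rb) Rb Rd | exists 0%N; left; apply: eq_agree].
  have Cds : conn d s.
    exists d, (phipow (fun h => d h + b h) 1); split; first by exists 0%N; apply: eq_agree.
    split; first exact: chainS (chain0 Rd) Rd Rb.
    by exists 0%N; left; apply: eq_agree => h; rewrite /s /phipow addrC.
  exact: conn_trans Cbs (conn_sym Rs Cds).
apply: conn_pm_orbit => //; exists 0%N; right => h Hh.
have : s (phi h) = 0.
  have [//|nz] := eqVneq (s (phi h)) 0.
  by case: s0; exists (phi h); split=> //; exact: H0_phi.
by rewrite /s /phipow /= phiK => /eqP; rewrite addr_eq0 => /eqP.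
Qed.

Lemma conn_br_neq0 b d x y : is_root b -> is_root d ->
  rootspace b x -> rootspace d y -> br x y != 0 -> conn b d.
Proof. by move=> Rb Rd Rx Ry nz; apply: conn_rootspace_sum Rb Rd nz (rootspace_br Rx Ry). Qed.

Lemma br_rootspace_Hbr_hom p q r b d x y w : is_root b -> is_root d -> ~ conn b d ->
  Lg p x -> Lg q y -> Lg r w ->
  rootspace b x -> rootspace (fun h => - b h) y -> rootspace d w ->
  br w (br x y) = 0.
Proof.
move=> Rb Rd nCbd Gx Gy Gw Rx Ry Rw.
have Rd' := root_comp_phi Rd; have Rw' := rootspace_phiinv Rw.
have yw0 : br y (phiinv w) = 0.
  apply/eqP/negP => /negP nz; apply: nCbd.
  apply: conn_trans (conn_opp Rb) (conn_trans (conn_br_neq0 (root_opp Rb) Rd' Ry Rw' nz) _).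
  exact: conn_sym Rd' (conn_comp_phi Rd).
have wx0 : br (phiinv w) x = 0.
  apply/eqP/negP => /negP nz; apply: nCbd.
  exact: conn_sym Rb (conn_trans (conn_comp_phi Rd) (conn_br_neq0 Rd' Rb Rw' Rx nz)).
have := hom_jacobi Gx Gy (Lg_phiinv Gw).
rewrite yw0 wx0 !br0r !scaler0 !add0r phiinvK => /eqP.
by rewrite scaler_eq0 (negbTE (eps_neq0 _ _)) => /eqP.
Qed.

Lemma br_rootspace_Hbr b d x y w : is_root b -> is_root d -> ~ conn b d ->
  rootspace b x -> rootspace (fun h => - b h) y -> rootspace d w ->
  br w (br x y) = 0 /\ br (br x y) w = 0.
Proof.
move=> Rb Rd nCbd /rootspace_hdecomp [n [g [X [_ [HX ->]]]]].
move=> /rootspace_hdecomp [m [g' [Y [_ [HY ->]]]]] /rootspace_hdecomp [l [g'' [W [_ [HW ->]]]]].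
have core i j k : br (W k) (br (X i) (Y j)) = 0.
  case: (HX i) => G1 R1; case: (HY j) => G2 R2; case: (HW k) => G3 R3.
  exact: br_rootspace_Hbr_hom Rb Rd nCbd G1 G2 G3 R1 R2 R3.
split.
  rewrite br_suml big1 // => k _; rewrite br_suml br_sumr big1 // => i _.
  by rewrite !br_sumr big1.
rewrite br_sumr big1 // => k _; rewrite !br_suml big1 // => i _.
rewrite br_sumr br_suml big1 // => j _.
case: (HX i) => G1 _; case: (HY j) => G2 _; case: (HW k) => G3 _.
by rewrite (br_skew (Lg_br G1 G2) G3) core scaler0 oppr0.
Qed.

(* Hom-Jacobi for x', y', [phi^-1 x, phi^-1 y], using the previous lemma for
   the root b phi, which lies in the class of b. *)
Lemma br_Hbr_Hbr_hom p q p' q' b d x y x' y' : is_root b -> is_root d -> ~ conn b d ->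
  Lg p x -> Lg q y -> Lg p' x' -> Lg q' y' ->
  rootspace b x -> rootspace (fun h => - b h) y ->
  rootspace d x' -> rootspace (fun h => - d h) y' ->
  br (br x y) (br x' y') = 0.
Proof.
move=> Rb Rd nCbd Gx Gy Gx' Gy' Rx Ry Rx' Ry'.
have Rb' := root_comp_phi Rb; have Cb := conn_comp_phi Rb.
have nC1 : ~ conn (fun h => b (phi h)) (fun h => - d h).
  by move=> C; apply: nCbd; apply: conn_trans Cb (conn_trans C (conn_oppl Rd)).
have nC2 : ~ conn (fun h => b (phi h)) d by move=> C; apply: nCbd; apply: conn_trans Cb C.
have Rx0 := rootspace_phiinv Rx; have Ry0 := rootspace_phiinv Ry.
have [e1 _] := br_rootspace_Hbr Rb' (root_opp Rd) nC1 Rx0 Ry0 Ry'.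
have [_ e2] := br_rootspace_Hbr Rb' Rd nC2 Rx0 Ry0 Rx'.
have := hom_jacobi Gx' Gy' (Lg_br (Lg_phiinv Gx) (Lg_phiinv Gy)).
rewrite e1 e2 !br0r !scaler0 !add0r phi_br !phiinvK => /eqP.
by rewrite scaler_eq0 (negbTE (eps_neq0 _ _)) => /eqP.
Qed.

Lemma br_Hbr_Hbr b d x y x' y' : is_root b -> is_root d -> ~ conn b d ->
  rootspace b x -> rootspace (fun h => - b h) y ->
  rootspace d x' -> rootspace (fun h => - d h) y' ->
  br (br x y) (br x' y') = 0.
Proof.
move=> Rb Rd nCbd /rootspace_hdecomp [n [g [X [_ [HX ->]]]]].
move=> /rootspace_hdecomp [m [g' [Y [_ [HY ->]]]]].
move=> /rootspace_hdecomp [l [g'' [X' [_ [HX' ->]]]]] /rootspace_hdecomp [o [g3 [Y' [_ [HY' ->]]]]].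
rewrite br_suml br_suml big1 // => i _; rewrite br_sumr br_suml big1 // => j _.
rewrite br_suml br_sumr big1 // => k _; rewrite !br_sumr big1 // => t _.
case: (HX i) => G1 R1; case: (HY j) => G2 R2; case: (HX' k) => G3 R3; case: (HY' t) => G4 R4.
exact: br_Hbr_Hbr_hom Rb Rd nCbd G1 G2 G3 G4 R1 R2 R3 R4.
Qed.

Lemma br_spanP_eq0 (P Q : L -> Prop) : (forall p q, P p -> Q q -> br p q = 0) ->
  forall x y, spanP P x -> spanP Q y -> br x y = 0.
Proof.
move=> PQ x y [n [cs [v [Pv ->]]]] [m [es [w [Qw ->]]]].
rewrite br_suml big1 // => i _; rewrite br_sumr big1 // => j _.
by rewrite brZl brZr PQ // !scaler0.
Qed.

Lemma root_classes_unlinked a c b d : is_root c -> ~ conn c a ->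
  root_class S H a b -> root_class S H c d -> ~ conn b d.
Proof.
move=> Rc nCca [Rb Cba] [Rd Cdc] Cbd; apply: nCca.
apply: conn_trans (conn_sym Rc (connected_conn Cdc)) _.
exact: conn_trans (conn_sym Rd Cbd) (connected_conn Cba).
Qed.

Section UnlinkedClasses.
Variables a c : L -> K.
Hypothesis unlinked : forall b d, root_class S H a b -> root_class S H c d -> ~ conn b d.

Lemma br_H_class_H_class x y : H_class S H a x -> H_class S H c y -> br x y = 0.
Proof.
apply: br_spanP_eq0 => _ _ [b [x1 [y1 [Cb [R1 [R2 ->]]]]]] [d [x2 [y2 [Cd [R3 [R4 ->]]]]]].
exact: br_Hbr_Hbr Cb.1 Cd.1 (unlinked Cb Cd) R1 R2 R3 R4.
Qed.

Lemma br_H_class_V_class x y : H_class S H a x -> V_class S H c y -> br x y = 0.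
Proof.
apply: br_spanP_eq0 => _ q [b [x1 [y1 [Cb [R1 [R2 ->]]]]]] [d [Cd Rq]].
exact: (br_rootspace_Hbr Cb.1 Cd.1 (unlinked Cb Cd) R1 R2 Rq).2.
Qed.

Lemma br_V_class_H_class x y : V_class S H a x -> H_class S H c y -> br x y = 0.
Proof.
apply: br_spanP_eq0 => p _ [b [Cb Rp]] [d [x2 [y2 [Cd [R3 [R4 ->]]]]]].
have nCdb : ~ conn d b by move=> C; apply: (unlinked Cb Cd); apply: conn_sym Cb.1 C.
exact: (br_rootspace_Hbr Cd.1 Cb.1 nCdb R3 R4 Rp).1.
Qed.

Lemma br_V_class_V_class x y : V_class S H a x -> V_class S H c y -> br x y = 0.
Proof.
apply: br_spanP_eq0 => p q [b [Cb Rp]] [d [Cd Rq]].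
apply/eqP/negP => /negP nz.
exact: (unlinked Cb Cd) (conn_br_neq0 Cb.1 Cd.1 Rp Rq nz).
Qed.

End UnlinkedClasses.

End HomLieColorAlgebra.

Theorem mainTheorem8 (K : fieldType) (G : zmodType) (L : lmodType K)
  (S : @HLCdata K G L) (H : L -> Prop) :
  HomLieColor S -> regular S -> max_abelian_subalgebra S H ->
  split_alg S H -> symmetric_roots S H ->
  forall a c : L -> K, is_root S H a -> is_root S H c ->
  ~ root_class S H a c ->
  forall x y, L_class S H a x -> L_class S H c y -> br S x y = 0.
Proof.
move=> HLC REG [H_subalg _] _ roots_sym a c Ra Rc nRac.
have nCca : ~ conn S H c a.
  by move=> C; apply: nRac; split=> //; apply: conn_connected.
have unlinked := root_classes_unlinked HLC REG H_subalg roots_sym Rc nCca.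
move=> _ _ [hx [vx [Hx [Vx ->]]]] [hy [vy [Hy [Vy ->]]]].
rewrite !(brDl HLC) !(brDr HLC).
rewrite (br_H_class_H_class HLC REG H_subalg roots_sym unlinked Hx Hy).
rewrite (br_H_class_V_class HLC REG H_subalg roots_sym unlinked Hx Vy).
rewrite (br_V_class_H_class HLC REG H_subalg roots_sym unlinked Vx Hy).
by rewrite (br_V_class_V_class HLC REG H_subalg roots_sym unlinked Vx Vy) !addr0.
Qed.
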